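(* Let $\xi\in(0,1)$, let $\rho(x)=\sum_{j\ge2}\rho_jx^{j-1}$ be a degree distribution with average degree $a$ (i.e. $1/a=\int_0^1\rho(x)dx$) and maximal degree at most $k_ca$ for a constant $k_c$. Then for every $x\in(0,\xi]$, $$\frac{d^2}{dx^2}[\rho(1-x)]\le -\frac{k_ca}{1-\xi}\,\frac{d}{dx}[\rho(1-x)].$$
   Context: A degree distribution is a polynomial $\rho(x)=\sum_{j\ge2}\rho_jx^{j-1}$ with $\rho_j\ge0$ and $\sum_j\rho_j=1$; its maximal degree is the largest $j$ with $\rho_j\ne0$. *)

From Stdlib Require Import Reals.
From Coquelicot Require Import Coquelicot.
Open Scope R_scope.

Definition is_degree_distribution (c : nat -> R) (N : nat) : Prop :=
  (forall j, 0 <= c j) /\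
  c 0%nat = 0 /\ c 1%nat = 0 /\
  (forall j, (N < j)%nat -> c j = 0) /\
  sum_f_R0 c N = 1.

(* rho(x) = sum_{j>=2} rho_j x^(j-1)  (terms j = 0,1 vanish since c 0 = c 1 = 0) *)
Definition rho_fun (c : nat -> R) (N : nat) (x : R) : R :=
  sum_f_R0 (fun j => c j * x ^ (j - 1)) N.

Definition max_degree_le (c : nat -> R) (D : R) : Prop :=
  forall j, c j <> 0 -> INR j <= D.

(* Write f(y) = rho(1 - y) = sum_j rho_j (1 - y)^(j-1).  Then f'' and -f' are
   sums with nonnegative coefficients, and termwise the j-th summand of f'' is
   (j - 2)/(1 - y) times that of -f'.  Since j - 2 <= k_c a whenever rho_j <> 0,
   and 1/(1 - y) <= 1/(1 - xi) on (0, xi], the inequality holds term by term. *)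

From Stdlib Require Import Reals Lra Lia.
From Coquelicot Require Import Coquelicot.
Open Scope R_scope.

Lemma is_derive_pow_1m (e : nat) (y : R) :
  is_derive (fun y => (1 - y) ^ e) y (- (INR e * (1 - y) ^ (e - 1))).
Proof.
  assert (Hlin : is_derive (fun y : R => 1 - y) y (-1)) by (auto_derive; [auto | ring]).
  pose proof (is_derive_pow _ e _ _ Hlin) as Hpow.
  rewrite Nat.sub_1_r.
  replace (- (INR e * (1 - y) ^ Nat.pred e)) with (INR e * -1 * (1 - y) ^ Nat.pred e) by ring.
  exact Hpow.
Qed.

Lemma is_derive_sum_pow_1m (b : nat -> R) (e : nat -> nat) (n : nat) (y : R) :
  is_derive (fun y => sum_f_R0 (fun j => b j * (1 - y) ^ e j) n) y
    (- sum_f_R0 (fun j => b j * INR (e j) * (1 - y) ^ (e j - 1)) n).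
Proof.
  induction n as [|n IH]; simpl.
  - replace (- (b 0%nat * INR (e 0%nat) * (1 - y) ^ (e 0%nat - 1)))
      with (b 0%nat * - (INR (e 0%nat) * (1 - y) ^ (e 0%nat - 1))) by ring.
    apply (is_derive_scal _ _ (b 0%nat)), is_derive_pow_1m.
  - pose proof (is_derive_scal _ _ (b (S n)) _ (is_derive_pow_1m (e (S n)) y)) as Hterm.
    pose proof (is_derive_plus _ _ _ _ _ IH Hterm) as Hsum.
    replace (- (sum_f_R0 (fun j => b j * INR (e j) * (1 - y) ^ (e j - 1)) n
                + b (S n) * INR (e (S n)) * (1 - y) ^ (e (S n) - 1)))
      with (plus (- sum_f_R0 (fun j => b j * INR (e j) * (1 - y) ^ (e j - 1)) n)
                 (scal (b (S n)) (- (INR (e (S n)) * (1 - y) ^ (e (S n) - 1)))))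
      by (unfold plus, scal; simpl; unfold mult; simpl; ring).
    exact Hsum.
Qed.

Lemma Derive_rho_1m (c : nat -> R) (N : nat) (y : R) :
  Derive (fun y => rho_fun c N (1 - y)) y
  = - sum_f_R0 (fun j => c j * INR (j - 1) * (1 - y) ^ (j - 2)) N.
Proof.
  apply is_derive_unique.
  rewrite (sum_eq _ (fun j => c j * INR (j - 1) * (1 - y) ^ (j - 1 - 1))).
  - exact (is_derive_sum_pow_1m c (fun j => j - 1)%nat N y).
  - intros j _; now replace (j - 1 - 1)%nat with (j - 2)%nat by lia.
Qed.

Lemma Derive2_rho_1m (c : nat -> R) (N : nat) (y : R) :
  Derive (Derive (fun y => rho_fun c N (1 - y))) y
  = sum_f_R0 (fun j => c j * INR (j - 1) * INR (j - 2) * (1 - y) ^ (j - 3)) N.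
Proof.
  rewrite (Derive_ext _ _ y (Derive_rho_1m c N)), Derive_opp, <- Ropp_involutive.
  f_equal; apply is_derive_unique.
  rewrite (sum_eq _ (fun j => c j * INR (j - 1) * INR (j - 2) * (1 - y) ^ (j - 2 - 1))).
  - exact (is_derive_sum_pow_1m (fun j => c j * INR (j - 1)) (fun j => j - 2)%nat N y).
  - intros j _; now replace (j - 2 - 1)%nat with (j - 3)%nat by lia.
Qed.

Lemma pow_pred_le (t K : R) (n : nat) :
  0 <= t -> 0 <= K -> INR n <= K * t -> INR n * t ^ (n - 1) <= K * t ^ n.
Proof.
  intros Ht HK Hn; destruct n as [|n]; simpl.
  - lra.
  - rewrite Nat.sub_0_r.
    replace (K * (t * t ^ n)) with (K * t * t ^ n) by ring.
    apply Rmult_le_compat_r; [apply pow_le |]; assumption.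
Qed.

Lemma le_mul_ratio (D s t : R) : 0 <= D -> 0 < s <= t -> D <= D / s * t.
Proof.
  intros HD Hst.
  replace (D / s * t) with (D + D * ((t - s) / s)) by (field; lra).
  assert (0 <= (t - s) / s) by (apply Rdiv_le_0_compat; lra).
  nra.
Qed.

Theorem proposition2 (xi : R) (c : nat -> R) (N : nat) (a kc : R) :
  0 < xi < 1 ->
  is_degree_distribution c N ->
  / a = RInt (rho_fun c N) 0 1 ->
  max_degree_le c (kc * a) ->
  forall x : R, 0 < x <= xi ->
    Derive (Derive (fun y => rho_fun c N (1 - y))) x
      <= - (kc * a / (1 - xi)) * Derive (fun y => rho_fun c N (1 - y)) x.
Proof.
  intros Hxi [Hc_nonneg _] _ Hmax x Hx.
  rewrite Derive2_rho_1m, Derive_rho_1m, Rmult_opp_opp, scal_sum.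
  apply sum_Rle; intros j _.
  destruct (Req_dec (c j) 0) as [Hcj | Hcj].
  { rewrite Hcj, !Rmult_0_l; lra. }
  set (K := kc * a / (1 - xi)).
  assert (Hka : 0 <= kc * a) by (pose proof (Hmax j Hcj); pose proof (pos_INR j); lra).
  assert (HK : 0 <= K) by (apply Rdiv_le_0_compat; lra).
  assert (Hdeg : INR (j - 2) <= K * (1 - x)).
  { apply Rle_trans with (INR j); [apply le_INR; lia |].
    apply Rle_trans with (kc * a); [exact (Hmax j Hcj) |].
    apply le_mul_ratio; lra. }
  pose proof (pow_pred_le (1 - x) K (j - 2) ltac:(lra) HK Hdeg) as Hterm.
  replace (j - 3)%nat with (j - 2 - 1)%nat by lia.
  assert (Hcoef : 0 <= c j * INR (j - 1)) by (pose proof (Hc_nonneg j); pose proof (pos_INR (j - 1)); nra).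
  nra.
Qed.
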